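(* Let $p\ge2$ be an integer and let $f\in\mathcal{R}$ be nonzero with $U_pf=\lambda_pf$ for some $\lambda_p\neq0$, and let $L$ be the level of $f$ (all poles of such $f$ are roots of unity). Then for every positive integer $m$, $f$ is an eigenfunction of $U_{p+mL}$, i.e. $U_{p+mL}f=\lambda_{p+mL}f$ for some real $\lambda_{p+mL}$. In addition, $f$ is an eigenfunction of $U_q$ for infinitely many primes $q$.
   Context: $\mathcal{R}$ denotes the real vector space of rational functions $f(x)=A(x)/B(x)$ with $A,B\in\mathbb{R}[x]$, $B(0)\neq 0$ and $\deg A<\deg B$. For $f\in\mathcal{R}$ with Taylor expansion $f(x)=\sum_{n\ge0}a_nx^n$ at $0$ and a positive integer $q$, $U_qf(x)=\sum_{n\ge 0}a_{qn}x^n$. If all poles of $f$ are roots of unity, the level of $f$ is the least common multiple of the orders of these roots of unity. *)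

From mathcomp Require Import all_boot all_order all_algebra.
From mathcomp Require Import reals.
From mathcomp Require Import complex.
Set Implicit Arguments. Unset Strict Implicit. Unset Printing Implicit Defensive.
Import Order.TTheory GRing.Theory Num.Theory.
Local Open Scope ring_scope.

Section RatFun.
Variable R : realType.
(* f = A / B with B(0) <> 0; its Taylor coefficients a_n at 0 are the unique
   sequence with B * (sum a_n x^n) = A as formal power series, i.e.
   a_n = (A_n - sum_{k=1}^n B_k a_{n-k}) / B_0. *)
Fixpoint taylor_coefs (A B : {poly R}) (n : nat) : seq R :=
  match n with
  | 0 => [:: A`_0 / B`_0]
  | n'.+1 => let s := taylor_coefs A B n' in
      rcons s ((A`_n - \sum_(1 <= k < n.+1) B`_k * s`_(n - k)) / B`_0)
  end.

Definition taylor (A B : {poly R}) (n : nat) : R := (taylor_coefs A B n)`_n.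

(* U_q f = lam * f, compared coefficientwise: a_{q n} = lam a_n. *)
Definition eigenU (q : nat) (A B : {poly R}) (lam : R) : Prop :=
  forall n : nat, taylor A B (q * n)%N = lam * taylor A B n.

Definition is_pole (A B : {poly R}) (z : R[i]) : Prop :=
  root (map_poly (fun x : R => (x%:C)%C) (B %/ gcdp A B)) z.

Definition is_level (A B : {poly R}) (L : nat) : Prop :=
  (0 < L)%N /\
  (forall (z : R[i]) (n : nat), is_pole A B z -> n.-primitive_root z -> (n %| L)%N) /\
  (forall M : nat, (0 < M)%N ->
     (forall (z : R[i]) (n : nat), is_pole A B z -> n.-primitive_root z -> (n %| M)%N) ->
     (L <= M)%N).
End RatFun.

From mathcomp Require Import all_boot all_order all_algebra.
From mathcomp Require Import reals complex.
From mathcomp Require Import ring fingroup perm separable cyclotomic.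
From mathcomp Require finfield.
From Stdlib Require Import Classical.
Set Implicit Arguments. Unset Strict Implicit. Unset Printing Implicit Defensive.
Import Order.TTheory GRing.Theory Num.Theory.
Local Open Scope ring_scope.

(* Write f = A0 / D in lowest terms, with Taylor coefficients a.  If U_p f = lam f
   with lam <> 0, then U_p (S(X^p) f) = lam S f shows that D divides
   prod (X - z^p) over its roots z, so z |-> z^p permutes the roots of D and they
   are (p^K - 1)-th roots of unity.  Consequently a is a quasi-polynomial: on
   each residue class r mod T (T a common order of the poles), a(m) = Q_r(m).
   As p^K = 1 mod T, the eigenrelation for U_(p^K) forces every Q_r to be
   c_r m^d for one exponent d, whence a(q n) = lam (q/p)^d a(n) for every
   q = p mod T.  This covers q = p + m L, and also every prime q = 1 mod p^K - 1;
   there are infinitely many of those, since for x divisible by (p^K - 1) N!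
   any prime factor of Phi_(p^K - 1)(x) is 1 mod p^K - 1 and exceeds N. *)

Section Convolution.
Variable R : comNzRingType.
Implicit Types (P Q S : {poly R}) (a b : nat -> R).

(* [conv P a n] is the [n]-th coefficient of the product of [P] with the
   formal power series whose coefficients are [a]. *)
Definition conv P a (n : nat) : R := \sum_(i < n.+1) P`_i * a (n - i)%N.

Lemma eq_conv P a b : a =1 b -> conv P a =1 conv P b.
Proof. by move=> eq_ab n; apply: eq_bigr => i _; rewrite eq_ab. Qed.

Lemma conv_coefs P Q n : conv P (nth 0 Q) n = (P * Q)`_n.
Proof. by rewrite coefM. Qed.

Lemma conv_truncated P a n : conv P a n = (P * \poly_(i < n.+1) a i)`_n.
Proof.
by rewrite coefM; apply: eq_bigr => i _; rewrite coef_poly ltnS leq_subr.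
Qed.

Lemma eq_coefMr S P Q k :
  (forall m, (m <= k)%N -> P`_m = Q`_m) -> (S * P)`_k = (S * Q)`_k.
Proof.
by move=> eqPQ; rewrite !coefM; apply: eq_bigr => i _; rewrite eqPQ ?leq_subr.
Qed.

Lemma conv_mul P Q a n : conv (P * Q) a n = conv P (conv Q a) n.
Proof.
rewrite !conv_truncated -mulrA; apply: eq_coefMr => m le_mn.
rewrite coef_poly ltnS le_mn conv_truncated; apply: eq_coefMr => k le_km.
by rewrite !coef_poly !ltnS le_km (leq_trans le_km le_mn).
Qed.

Lemma conv1 a n : conv 1 a n = a n.
Proof.
rewrite /conv big_ord_recl coef1 mul1r subn0 big1 ?addr0 // => i _.
by rewrite coef1 mul0r.
Qed.

Lemma convC c a n : conv c%:P a n = c * a n.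
Proof.
rewrite /conv big_ord_recl coefC subn0 big1 ?addr0 // => i _.
by rewrite coefC mul0r.
Qed.

Lemma convX a n : conv 'X a n = if n is n'.+1 then a n' else 0.
Proof.
case: n => [|n]; first by rewrite /conv big_ord1 coefX mul0r.
rewrite /conv big_ord_recl coefX mul0r add0r big_ord_recl coefX mul1r /=.
by rewrite subSS subn0 big1 ?addr0 // => i _; rewrite coefX mul0r.
Qed.

Lemma convXn k a n : conv 'X^k a n = if (k <= n)%N then a (n - k)%N else 0.
Proof.
elim: k a n => [|k IHk] a n; first by rewrite expr0 conv1 subn0.
by rewrite exprS conv_mul convX; case: n => [|n] //; rewrite IHk ltnS subSS.
Qed.

Lemma convDl P Q a n : conv (P + Q) a n = conv P a n + conv Q a n.
Proof. by rewrite /conv -big_split; apply: eq_bigr => i _; rewrite coefD mulrDl. Qed.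

Lemma convBl P Q a n : conv (P - Q) a n = conv P a n - conv Q a n.
Proof. by rewrite /conv -sumrB; apply: eq_bigr => i _; rewrite coefB mulrBl. Qed.

Lemma convDr P a b n : conv P (fun k => a k + b k) n = conv P a n + conv P b n.
Proof. by rewrite /conv -big_split; apply: eq_bigr => i _; rewrite mulrDr. Qed.

Lemma convBr P a b n : conv P (fun k => a k - b k) n = conv P a n - conv P b n.
Proof. by rewrite /conv -sumrB; apply: eq_bigr => i _; rewrite mulrBr. Qed.

Lemma convZr c P a n : conv P (fun k => c * a k) n = c * conv P a n.
Proof. by rewrite /conv mulr_sumr; apply: eq_bigr => i _; rewrite mulrCA. Qed.

Lemma conv_comp_Xn S T r a n : (r < T)%N ->
  conv (S \Po 'X^T) a (r + T * n) = conv S (fun k => a (r + T * k)%N) n.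
Proof.
move=> lt_rT; elim/poly_ind: S n => [|S c IHS] n.
  by rewrite comp_poly0 /conv !big1 // => i _; rewrite coef0 mul0r.
rewrite comp_poly_MXaddC !convDl !convC; congr (_ + _).
rewrite [_ * 'X^T]mulrC [S * 'X]mulrC !conv_mul convXn convX.
case: n => [|n]; first by rewrite muln0 addn0 leqNgt lt_rT.
rewrite -IHS mulnS addnCA leq_addr; congr conv.
by rewrite addKn.
Qed.

End Convolution.

Lemma conv_cancel (R : idomainType) (P : {poly R}) (a b : nat -> R) :
  P`_0 != 0 -> (forall n, conv P a n = conv P b n) -> a =1 b.
Proof.
move=> P0 eq_conv_ab; elim/ltn_ind => n IHn; apply/eqP; rewrite -subr_eq0.
have := eq_conv_ab n; move/eqP; rewrite -subr_eq0 -convBr.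
rewrite /conv big_ord_recl subn0 big1 ?addr0 => [|i _].
  by rewrite mulf_eq0 (negbTE P0).
by rewrite /= IHn ?subrr ?mulr0 // subnSK ?leq_subr.
Qed.

Lemma conv_map (R S : comNzRingType) (f : {rmorphism R -> S}) (P : {poly R})
    (a : nat -> R) n :
  f (conv P a n) = conv (map_poly f P) (f \o a) n.
Proof. by rewrite rmorph_sum; apply: eq_bigr => i _; rewrite rmorphM coef_map. Qed.

Section TaylorCoefficients.
Variables (R : realType) (A B : {poly R}).

Lemma size_taylor_coefs n : size (taylor_coefs A B n) = n.+1.
Proof. by elim: n => [|n IHn] //=; rewrite size_rcons IHn. Qed.

Lemma nth_taylor_coefs n m : (m <= n)%N -> (taylor_coefs A B n)`_m = taylor A B m.
Proof.
elim: n => [|n IHn]; first by rewrite leqn0 => /eqP ->.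
rewrite leq_eqVlt => /orP[/eqP -> //|]; rewrite ltnS => le_mn.
by rewrite /= nth_rcons size_taylor_coefs ltnS le_mn IHn.
Qed.

Lemma conv_taylor n : B`_0 != 0 -> conv B (taylor A B) n = A`_n.
Proof.
move=> B0; case: n => [|n]; first by rewrite /conv big_ord1 /taylor /= mulrC divfK.
rewrite /conv big_ord_recl subn0.
have -> : taylor A B n.+1 =
    (A`_n.+1 - \sum_(1 <= k < n.+2) B`_k * taylor A B (n.+1 - k)) / B`_0.
  rewrite /taylor /= nth_rcons size_taylor_coefs ltnn eqxx; congr ((_ - _) / _).
  rewrite big_nat_cond [RHS]big_nat_cond; apply: eq_bigr => k /andP[/andP[k1 _] _].
  by rewrite nth_taylor_coefs // leq_subLR -add1n leq_add2r.
by rewrite mulrC divfK // big_add1 /= big_mkord subrK.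
Qed.

End TaylorCoefficients.

Lemma reduced_conv_fraction (F : fieldType) (A B : {poly F}) (a : nat -> F) :
    B`_0 != 0 -> (size A < size B)%N -> (forall n, conv B a n = A`_n) ->
  [/\ (B %/ gcdp A B)`_0 != 0, (size (A %/ gcdp A B)%R < size (B %/ gcdp A B)%R)%N,
      coprimep (A %/ gcdp A B) (B %/ gcdp A B)
    & forall n, conv (B %/ gcdp A B) a n = (A %/ gcdp A B)`_n].
Proof.
set G := gcdp A B; set A0 := A %/ G; set D := B %/ G => B0 ltAB convBA.
have EA : A = A0 * G by rewrite divpK ?dvdp_gcdl.
have EB : B = D * G by rewrite divpK ?dvdp_gcdr.
have /andP[D0 G0] : (D`_0 != 0) && (G`_0 != 0).
  by move: B0; rewrite EB coef0M mulf_eq0 negb_or.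
have B_neq0 : B != 0 by apply: contraNneq B0 => ->; rewrite coef0.
have G_neq0 : G != 0 by apply: contraNneq G0 => ->; rewrite coef0.
split=> //; first by rewrite ltn_divpl // -EB.
  by rewrite coprimep_div_gcd // B_neq0 orbT.
apply: (conv_cancel G0) => n.
by rewrite -conv_mul mulrC -EB convBA conv_coefs mulrC -EA.
Qed.

Definition Ueigen (R : nzRingType) (a : nat -> R) (q : nat) (lam : R) : Prop :=
  forall n, a (q * n)%N = lam * a n.

Lemma Ueigen_exp (R : nzRingType) (a : nat -> R) p lam k :
  Ueigen a p lam -> Ueigen a (p ^ k) (lam ^+ k).
Proof.
move=> eig_p n; elim: k => [|k IHk]; first by rewrite expn0 mul1n expr0 mul1r.
by rewrite expnS -mulnA eig_p IHk exprS mulrA.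
Qed.

(* [U_p (S(X^p) P/Q) = lam S P/Q], and the left side is a polynomial when
   [Q | S(X^p)]; hence [Q | S P], and [Q | S] by coprimality. *)
Lemma Ueigen_dvdp_comp_Xn (F : fieldType) (P Q S : {poly F}) (a : nat -> F) p lam :
    (0 < p)%N -> lam != 0 -> coprimep P Q -> (forall n, conv Q a n = P`_n) ->
    Ueigen a p lam ->
  Q %| S \Po 'X^p -> Q %| S.
Proof.
move=> p_gt0 lam0 copPQ convQP eig_p dvdQS.
set N := (S \Po 'X^p) %/ Q.
set U := \poly_(i < size (N * P)) (N * P)`_(p * i).
have convSU n : conv S a n = (lam^-1 *: U)`_n.
  have : lam * conv S a n = (N * P)`_(p * n).
    rewrite -convZr -(eq_conv _ eig_p) -[(p * n)%N]add0n.
    rewrite -[conv S _ n](conv_comp_Xn _ _ _ p_gt0) -(divpK dvdQS) conv_mul -conv_coefs.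
    by apply: eq_conv => k; rewrite convQP.
  rewrite coefZ coef_poly; case: ltnP => [_ <-|le_size]; first by rewrite mulKf.
  rewrite mulr0 nth_default; last exact: leq_trans le_size (leq_pmull _ p_gt0).
  by move/eqP; rewrite mulf_eq0 (negbTE lam0) => /eqP.
have : S * P = Q * (lam^-1 *: U).
  apply/polyP => n; rewrite -conv_coefs (eq_conv _ (fun k => esym (convQP k))).
  by rewrite -conv_mul mulrC conv_mul (eq_conv _ convSU) conv_coefs.
rewrite coprimep_sym in copPQ.
by move=> SPQ; rewrite -(Gauss_dvdpl S copPQ) SPQ dvdp_mulIl.
Qed.

Lemma dvdp_prod_XsubC_comp_Xn (R : idomainType) (s : seq R) p :
  \prod_(z <- s) ('X - z%:P) %| (\prod_(z <- s) ('X - (z ^+ p)%:P)) \Po 'X^p.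
Proof.
elim: s => [|z s IHs]; first by rewrite !big_nil comp_polyC dvdpp.
rewrite !big_cons comp_polyM dvdp_mul //.
by rewrite comp_polyB comp_polyX comp_polyC dvdp_XsubCl /root !hornerE subrr.
Qed.

Lemma iter_fix_of_subset_map (T : choiceType) (s : seq T) (h : T -> T) :
  {subset s <= map h s} -> exists2 K, (0 < K)%N & {in s, forall z, iter K h z = z}.
Proof.
move=> s_sub_hs.
have preimage (z : seq_sub s) : exists w : seq_sub s, h (val w) == val z.
  by have /mapP[w ws ->] := s_sub_hs _ (valP z); exists (SeqSub ws).
pose g z := xchoose (preimage z).
have hg z : h (val (g z)) = val z by apply/eqP/(xchooseP (preimage z)).
have g_inj : injective g by move=> x y /(congr1 (h \o val)) /=; rewrite !hg => /val_inj.
have iter_hg k z : iter k h (val (iter k g z)) = val z.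
  by elim: k z => [|k IHk] z //; rewrite iterSr iterS hg IHk.
pose sigma := perm g_inj.
exists #[sigma]%g => [|z zs]; first exact: order_gt0.
have := iter_hg #[sigma]%g (SeqSub zs).
by rewrite -(eq_iter (permE g_inj)) -permX expg_order perm1.
Qed.

Lemma iter_expr (R : nzRingType) p k (z : R) :
  iter k (fun w => w ^+ p) z = z ^+ (p ^ k).
Proof. by elim: k => [|k IHk] /=; rewrite ?expr1 // IHk -exprM expnSr. Qed.

(* Every root of [Q] is the [p]-th power of a root of [Q], so [z |-> z ^+ p]
   permutes the finitely many roots. *)
Lemma Ueigen_roots_unity (F : closedFieldType) (P Q : {poly F}) (a : nat -> F) p lam :
    (0 < p)%N -> lam != 0 -> Q`_0 != 0 -> coprimep P Q ->
    (forall n, conv Q a n = P`_n) -> Ueigen a p lam ->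
  exists2 K, (0 < K)%N & forall z, root Q z -> z ^+ (p ^ K).-1 = 1.
Proof.
move=> p_gt0 lam0 Q0 copPQ convQP eig_p.
have Q_neq0 : Q != 0 by apply: contraNneq Q0 => ->; rewrite coef0.
have [rs Qrs] := closed_field_poly_normal Q.
have rootQ z : root Q z = (z \in rs).
  by rewrite Qrs rootZ ?root_prod_XsubC ?lead_coef_eq0.
set S := \prod_(z <- rs) ('X - (z ^+ p)%:P).
have dvdQS : Q %| S.
  apply: (Ueigen_dvdp_comp_Xn p_gt0 lam0 copPQ convQP eig_p).
  by rewrite Qrs dvdpZl ?lead_coef_eq0 ?dvdp_prod_XsubC_comp_Xn.
have rs_sub : {subset rs <= map (fun w => w ^+ p) rs}.
  move=> z; rewrite -rootQ => rootQz.
  have : root S z by rewrite -(divpK dvdQS) rootM rootQz orbT.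
  by rewrite /S -(big_map (fun w => w ^+ p) xpredT (fun y => 'X - y%:P)) root_prod_XsubC.
have [K K_gt0 fixK] := iter_fix_of_subset_map rs_sub.
exists K => // z rootQz.
have z_neq0 : z != 0.
  by apply: contraNneq Q0 => z0; move: rootQz; rewrite z0 /root horner_coef0.
apply: (mulIf z_neq0); rewrite mul1r -exprSr prednK ?expn_gt0 ?p_gt0 //.
by rewrite -iter_expr fixK -?rootQ.
Qed.

Lemma Ueigen_map_roots_unity (F : fieldType) (C : closedFieldType)
    (iota : {rmorphism F -> C}) (P Q : {poly F}) (a : nat -> F) p lam :
    (0 < p)%N -> lam != 0 -> Q`_0 != 0 -> coprimep P Q ->
    (forall n, conv Q a n = P`_n) -> Ueigen a p lam ->
  exists2 K, (0 < K)%N & forall z, root (map_poly iota Q) z -> z ^+ (p ^ K).-1 = 1.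
Proof.
move=> p_gt0 lam0 Q0 copPQ convQP eig_p.
apply: (@Ueigen_roots_unity _ (map_poly iota P) _ (iota \o a) p (iota lam)) => //.
- by rewrite fmorph_eq0.
- by rewrite coef_map fmorph_eq0.
- by rewrite coprimep_map.
- by move=> n; rewrite -conv_map convQP coef_map.
- by move=> n; rewrite /= eig_p rmorphM.
Qed.

Section Differences.
Variable R : numFieldType.
Implicit Types (P Q : {poly R}) (u : nat -> R).

Definition bdiff Q : {poly R} := Q \Po ('X - 1) - Q.

Definition rising (e : nat) : {poly R} := \prod_(i < e) ('X + i%:R%:P).

Lemma conv_Xsub1 u n : conv ('X - 1) u n = (if n is n'.+1 then u n' else 0) - u n.
Proof. by rewrite convBl convX conv1. Qed.

Lemma conv_Xsub1_horner Q n :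
  conv ('X - 1) (fun k => Q.[k%:R]) n = (bdiff Q).[n%:R] - (Q.[-1]%:P)`_n.
Proof.
rewrite conv_Xsub1 coefC !hornerE horner_comp !hornerE.
case: n => [|k] /=; first by rewrite !sub0r addrAC subrr sub0r.
by rewrite subr0 -natr1 addrK.
Qed.

Lemma conv_Xsub1_exp_horner e Q : exists2 P : {poly R}, (size P <= e)%N &
  forall n, conv (('X - 1) ^+ e) (fun k => Q.[k%:R]) n = (iter e bdiff Q).[n%:R] + P`_n.
Proof.
elim: e => [|e [P size_P convP]].
  by exists 0; rewrite ?size_poly0 // => n; rewrite expr0 conv1 coef0 addr0.
exists (- (iter e bdiff Q).[-1]%:P + ('X - 1) * P).
  rewrite (leq_trans (size_polyD _ _)) // geq_max size_polyN.
  rewrite (leq_trans (size_polyC_leq1 _)) //=.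
  by rewrite (leq_trans (size_polyMleq _ _)) // size_XsubC.
move=> n; rewrite exprS conv_mul (eq_conv _ convP) convDr conv_Xsub1_horner.
by rewrite conv_coefs coefD coefN iterS addrA.
Qed.

Lemma iter_bdiffZ e c Q : iter e bdiff (c *: Q) = c *: iter e bdiff Q.
Proof.
by elim: e => [|e IHe] //=; rewrite IHe /bdiff comp_polyZ scalerBr.
Qed.

Lemma bdiff_rising e : bdiff (rising e.+1) = - (e.+1)%:R *: rising e.
Proof.
have shift : rising e.+1 \Po ('X - 1) = ('X - 1) * rising e.
  rewrite rmorph_prod big_ord_recl /= comp_polyD comp_polyX comp_polyC addr0.
  congr (_ * _); apply: eq_bigr => i _.
  rewrite comp_polyD comp_polyX comp_polyC /bump /= add1n -natr1 polyCD; ring.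
have risingS : rising e.+1 = rising e * ('X + e%:R%:P) by rewrite /rising big_ord_recr.
by rewrite /bdiff shift risingS -mul_polyC polyCN -natr1 polyCD; ring.
Qed.

Lemma iter_bdiff_rising e : iter e bdiff (rising e) = ((-1) ^+ e * e`!%:R)%:P.
Proof.
elim: e => [|e IHe]; first by rewrite /rising big_ord0 expr0 mul1r.
rewrite iterSr bdiff_rising iter_bdiffZ IHe -mul_polyC -polyCM factS natrM exprS.
by congr _%:P; ring.
Qed.

Lemma conv_Xsub1_exp_polynomial e u P : (size P <= e)%N ->
  (forall n, conv (('X - 1) ^+ e) u n = P`_n) ->
  exists Q : {poly R}, forall k, u k = Q.[k%:R].
Proof.
elim: e u P => [|e IHe] u P size_P convP.
  exists 0 => k; move: size_P; rewrite leqn0 size_poly_eq0 => /eqP P0.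
  by rewrite -conv1 convP P0 coef0 horner0.
set w := conv (('X - 1) ^+ e) u.
have w_const j : w (e + j)%N = w e.
  elim: j => [|j IHj]; first by rewrite addn0.
  have := convP (e + j).+1; rewrite exprS conv_mul conv_Xsub1 -/w nth_default.
    by move/eqP; rewrite subr_eq0 addnS => /eqP <-.
  by rewrite (leq_trans size_P) // ltnS leq_addr.
have fact_neq0 : (-1) ^+ e * e`!%:R != 0 :> R.
  by rewrite mulf_neq0 ?signr_eq0 // pnatr_eq0 -lt0n fact_gt0.
(* [w] is eventually constant; subtracting a polynomial [G] whose [e]-th
   difference is that constant lowers [e] by one. *)
set G := (w e / ((-1) ^+ e * e`!%:R)) *: rising e.
have iterG : iter e bdiff G = (w e)%:P.
  by rewrite iter_bdiffZ iter_bdiff_rising -mul_polyC -polyCM divfK.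
have [P1 size_P1 convG] := conv_Xsub1_exp_horner e G.
have [Q uGQ] : exists Q : {poly R}, forall k, u k - G.[k%:R] = Q.[k%:R].
  apply: (IHe _ (\poly_(i < e) (w i - (w e + P1`_i)))) => [|n]; first exact: size_poly.
  rewrite convBr -/(w n) convG iterG hornerC coef_poly.
  case: ltnP => // le_en; rewrite nth_default ?(leq_trans size_P1) // addr0.
  by rewrite -(subnKC le_en) w_const subrr.
by exists (Q + G) => k; rewrite hornerD -uGQ subrK.
Qed.

End Differences.

Definition quasi_polynomial (R : nzRingType) (T : nat) (a : nat -> R) : Prop :=
  forall r, (r < T)%N -> exists Q : {poly R}, forall m, (m %% T = r)%N -> a m = Q.[m%:R].

Lemma dvdp_Xn_sub1_exp (F : closedFieldType) (Q : {poly F}) T :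
  Q != 0 -> (forall z, root Q z -> z ^+ T = 1) -> exists e, Q %| ('X^T - 1) ^+ e.
Proof.
move=> Q_neq0 rootsQ; have [rs Qrs] := closed_field_poly_normal Q.
exists (size rs); rewrite Qrs dvdpZl ?lead_coef_eq0 //.
have : {in rs, forall z, z ^+ T = 1}.
  by move=> z zs; apply: rootsQ; rewrite Qrs rootZ ?root_prod_XsubC ?lead_coef_eq0.
elim: rs {Qrs} => [|z rs IHrs] rs_unity; first by rewrite big_nil dvd1p.
rewrite big_cons exprS dvdp_mul //.
  by rewrite dvdp_XsubCl /root !hornerE rs_unity ?mem_head // subrr.
by apply: IHrs => y ys; apply: rs_unity; rewrite inE ys orbT.
Qed.

Lemma quasi_polynomial_of_dvdp (R : numFieldType) (a : nat -> R) (D A0 : {poly R}) T e :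
    (0 < T)%N -> (size A0 < size D)%N -> (forall n, conv D a n = A0`_n) ->
    D %| ('X^T - 1) ^+ e ->
  quasi_polynomial T a.
Proof.
move=> T_gt0 ltAD convDA dvdD r lt_rT.
set E := ('X^T - 1) ^+ e %/ D.
have XT_neq0 : 'X^T - 1 != 0 :> {poly R}.
  by rewrite -size_poly_eq0 -polyC1 size_XnsubC.
have ED : E * D = ('X^T - 1) ^+ e by rewrite divpK.
have E_neq0 : E != 0.
  by apply: contraTneq (expf_neq0 e XT_neq0); rewrite -ED => ->; rewrite mul0r eqxx.
have size_EA : (size (E * A0)%R <= T * e)%N.
  have D_neq0 : D != 0 by rewrite -size_poly_eq0 -lt0n (leq_ltn_trans (leq0n _) ltAD).
  have := size_exp ('X^T - 1 : {poly R}) e.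
  rewrite -ED size_mul // -polyC1 size_XnsubC //= => <-.
  apply: leq_trans (size_polyMleq E A0) _.
  rewrite -!subn1 leq_sub2r // subn1 -ltnS prednK ?ltn_add2l //.
  by rewrite addn_gt0 size_poly_gt0 E_neq0.
pose u k := a (r + T * k)%N.
have convu k : conv (('X - 1) ^+ e) u k = (\poly_(i < e) (E * A0)`_(r + T * i))`_k.
  rewrite /u -conv_comp_Xn // rmorphXn /= comp_polyB comp_polyX comp_polyC -ED.
  rewrite conv_mul (eq_conv _ convDA) conv_coefs coef_poly.
  case: ltnP => // le_ek; rewrite nth_default // (leq_trans size_EA) //.
  by rewrite (leq_trans _ (leq_addl _ _)) // leq_mul2l le_ek orbT.
have [Q uQ] := conv_Xsub1_exp_polynomial (size_poly _ _) convu.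
exists (Q \Po (T%:R^-1 *: ('X - r%:R%:P))) => m mod_m.
have Em : m = (r + T * (m %/ T))%N by rewrite {1}(divn_eq m T) mod_m addnC mulnC.
rewrite horner_comp !hornerE {1}Em -/(u _) uQ; congr Q.[_].
by rewrite {2}Em natrD natrM [r%:R + _]addrC addrK mulKf // pnatr_eq0 -lt0n.
Qed.

Lemma map_poly_Xn_sub1 (R S : nzRingType) (f : {rmorphism R -> S}) n :
  map_poly f ('X^n - 1) = 'X^n - 1.
Proof. by rewrite rmorphB /= rmorph1 map_polyXn. Qed.

Lemma quasi_polynomial_of_roots_unity (R : numFieldType) (C : closedFieldType)
    (iota : {rmorphism R -> C}) (a : nat -> R) (D A0 : {poly R}) T :
    (0 < T)%N -> (size A0 < size D)%N -> (forall n, conv D a n = A0`_n) ->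
    (forall z, root (map_poly iota D) z -> z ^+ T = 1) ->
  quasi_polynomial T a.
Proof.
move=> T_gt0 ltAD convDA rootsD.
have D_neq0 : map_poly iota D != 0.
  by rewrite map_poly_eq0 -size_poly_eq0 -lt0n (leq_ltn_trans (leq0n _) ltAD).
have [e] := dvdp_Xn_sub1_exp D_neq0 rootsD.
have -> : ('X^T - 1) ^+ e = map_poly iota (('X^T - 1) ^+ e).
  by rewrite rmorphXn /= map_poly_Xn_sub1.
by rewrite dvdp_map; apply: quasi_polynomial_of_dvdp T_gt0 ltAD convDA.
Qed.

Lemma poly_eq0_on_progression (R : numDomainType) (Q : {poly R}) r T :
  (0 < T)%N -> (forall k, Q.[(r + T * k)%:R] = 0) -> Q = 0.
Proof.
move=> T_gt0 rootsQ; apply/eqP; apply: contraT => Q_neq0.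
pose rs := [seq (r + T * k)%:R : R | k <- iota 0 (size Q)].
have := max_poly_roots Q_neq0 (rs := rs).
rewrite size_map size_iota ltnn; apply.
  by apply/allP => _ /mapP[k _ ->]; rewrite /root rootsQ.
rewrite map_inj_uniq ?iota_uniq // => k1 k2 /eqP.
by rewrite eqr_nat eqn_add2l eqn_mul2l eqn0Ngt T_gt0 => /eqP.
Qed.

Lemma horner_poly_scale (R : comNzRingType) (Q : {poly R}) c x :
  (\poly_(i < size Q) (Q`_i * c ^+ i)).[x] = Q.[c * x].
Proof.
rewrite (horner_coef_wide _ (size_poly _ _)) horner_coef.
by apply: eq_bigr => i _; rewrite coef_poly ltn_ord exprMn mulrA.
Qed.

(* Multiplication by [p'] preserves the residue class [r], on which the
   eigenrelation becomes the polynomial identity [Q(p' x) = lam' Q(x)]. *)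
Lemma Ueigen_quasi_polynomial_coef (R : numFieldType) (a : nat -> R) T p' lam' r
    (Q : {poly R}) :
    (r < T)%N -> (p' %% T = 1 %% T)%N -> (forall m, (m %% T = r)%N -> a m = Q.[m%:R]) ->
    Ueigen a p' lam' ->
  forall i, Q`_i != 0 -> lam' = p'%:R ^+ i.
Proof.
move=> lt_rT p'_mod aQ eig_p'.
set Qs := \poly_(i < size Q) (Q`_i * p'%:R ^+ i).
have : Qs - lam' *: Q = 0.
  apply: (poly_eq0_on_progression (r := r)); first exact: leq_ltn_trans lt_rT.
  move=> k; have mod_k : ((r + T * k) %% T = r)%N.
    by rewrite addnC mulnC modnMDl modn_small.
  rewrite hornerD hornerN hornerZ horner_poly_scale -natrM -!aQ ?eig_p' ?subrr //.
  by rewrite -modnMml p'_mod modnMml mul1n mod_k.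
move=> Qs_eq i Qi; apply/eqP; rewrite eq_sym -subr_eq0.
move/polyP/(_ i)/eqP: Qs_eq; rewrite coefB coefZ coef_poly coef0.
case: ltnP => [_|le_size]; last by rewrite nth_default ?eqxx in Qi.
by rewrite [lam' * _]mulrC -mulrBr mulf_eq0 (negbTE Qi).
Qed.

Lemma quasi_polynomial_homogeneous (R : numFieldType) T (a : nat -> R) p' lam' :
    (1 < p')%N -> (p' %% T = 1 %% T)%N -> quasi_polynomial T a -> Ueigen a p' lam' ->
  exists d, forall r, (r < T)%N ->
    exists c, forall m, (m %% T = r)%N -> a m = c * m%:R ^+ d.
Proof.
move=> p'_gt1 p'_mod qpa eig_p'.
have [d d_uniq] : exists d, forall i, lam' = p'%:R ^+ i -> i = d.
  case: (classic (exists d, lam' = p'%:R ^+ d)) => [[d ->]|no_d].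
    by exists d => i /eqP; rewrite -!natrX eqr_nat eqn_exp2l // => /eqP ->.
  by exists 0%N => i lam'_eq; case: no_d; exists i.
exists d => r lt_rT; have [Q aQ] := qpa r lt_rT.
have Q_coef := Ueigen_quasi_polynomial_coef lt_rT p'_mod aQ eig_p'.
have Q_monomial : Q = Q`_d *: 'X^d.
  apply/polyP => i; rewrite coefZ coefXn.
  have [->|ne_id] := eqVneq i d; first by rewrite mulr1.
  by rewrite mulr0; apply: contraNeq ne_id => /Q_coef/d_uniq ->.
by exists Q`_d => m mod_m; rewrite aQ // {1}Q_monomial hornerZ hornerXn.
Qed.

Lemma Ueigen_quasi_polynomial (R : numFieldType) T (a : nat -> R) p' lam' p lam q :
    (0 < T)%N -> (1 < p')%N -> (p' %% T = 1 %% T)%N -> quasi_polynomial T a ->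
    Ueigen a p' lam' -> (0 < p)%N -> Ueigen a p lam -> (q %% T = p %% T)%N ->
  exists mu, Ueigen a q mu.
Proof.
move=> T_gt0 p'_gt1 p'_mod qpa eig_p' p_gt0 eig_p q_mod.
have [d homog] := quasi_polynomial_homogeneous p'_gt1 p'_mod qpa eig_p'.
exists (lam * (q%:R / p%:R) ^+ d) => n.
have [c ac] := homog _ (ltn_pmod (p * n) T_gt0).
have qn_mod : ((q * n) %% T = (p * n) %% T)%N by rewrite -modnMml q_mod modnMml.
rewrite (ac _ qn_mod) [RHS]mulrAC -eig_p (ac _ erefl) !natrM !exprMn exprVn.
by field; rewrite expf_neq0 // pnatr_eq0 -lt0n.
Qed.

Lemma Cyclotomic_factor T : (0 < T)%N -> exists W : {poly int}, 'X^T - 1 = 'Phi_T * W.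
Proof.
move=> T_gt0; rewrite -(prod_Cyclotomic T_gt0) (bigD1_seq T) ?divisors_uniq //.
  by eexists.
by rewrite -dvdn_divisors.
Qed.

Lemma Cyclotomic_factor_Xn_sub1 T m : (0 < m)%N -> (m < T)%N -> (m %| T)%N ->
  exists W : {poly int}, 'X^T - 1 = ('X^m - 1) * ('Phi_T * W).
Proof.
move=> m_gt0 lt_mT dvd_mT; have T_gt0 : (0 < T)%N by apply: leq_trans lt_mT.
rewrite -(prod_Cyclotomic T_gt0) -(prod_Cyclotomic m_gt0).
rewrite (bigID (fun d => d %| m)%N) /=.
have -> : \prod_(d <- divisors T | (d %| m)%N) 'Phi_d = \prod_(d <- divisors m) 'Phi_d.
  rewrite -big_filter; apply/perm_big/uniq_perm; rewrite ?filter_uniq ?divisors_uniq //.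
  move=> d; rewrite mem_filter -!dvdn_divisors //.
  by apply/andP/idP => [[]//|dvd_dm]; split => //; apply: dvdn_trans dvd_mT.
rewrite -[X in _ * X]big_filter [X in _ * X](bigD1_seq T) ?filter_uniq ?divisors_uniq //=.
  by eexists.
rewrite mem_filter -dvdn_divisors // dvdnn andbT.
by apply: contraL lt_mT => /(dvdn_leq m_gt0); rewrite leqNgt.
Qed.

Section CyclotomicRoots.
Variables (F : fieldType) (T : nat) (y : F).
Hypotheses (T_gt0 : (0 < T)%N) (root_Phi : root (map_poly intr 'Phi_T) y).

Lemma root_Cyclotomic_unity : y ^+ T = 1.
Proof.
have [W EW] := Cyclotomic_factor T_gt0.
have /eqP := congr1 (fun P => (map_poly intr P).[y]) EW.
rewrite /= rmorphM hornerM (eqP root_Phi) mul0r map_poly_Xn_sub1 !hornerE.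
by rewrite subr_eq0 => /eqP.
Qed.

Lemma root_Cyclotomic_neq0 : y != 0.
Proof.
apply: contra_eqN root_Cyclotomic_unity => /eqP ->.
by rewrite expr0n gtn_eqF // eq_sym oner_eq0.
Qed.

(* Where [X^T - 1] is separable, a root of ['Phi_T] cannot also be a root of
   [X^m - 1] for a proper divisor [m] of [T]. *)
Lemma root_Cyclotomic_prim : T%:R != 0 :> F -> T.-primitive_root y.
Proof.
move=> T_neq0; have [m prim_m dvd_mT] := prim_order_exists T_gt0 root_Cyclotomic_unity.
have [<- //|ne_mT] := eqVneq m T.
have lt_mT : (m < T)%N by rewrite ltn_neqAle ne_mT dvdn_leq.
have [W EW] := Cyclotomic_factor_Xn_sub1 (prim_order_gt0 prim_m) lt_mT dvd_mT.
have := separable_Xn_sub_1 T_neq0.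
rewrite -(map_poly_Xn_sub1 intr) EW rmorphM /= map_poly_Xn_sub1 separable_mul.
have root_Xm : root ('X^m - 1) y by rewrite /root !hornerE prim_expr_order ?subrr.
case/and3P=> _ _ /coprimep_root/(_ root_Xm).
by rewrite rmorphM hornerM (eqP root_Phi) mul0r eqxx.
Qed.

End CyclotomicRoots.

Lemma prime_mod_of_root_Cyclotomic (q T : nat) (y : 'F_q) :
    prime q -> (0 < T)%N -> ~~ (q %| T)%N -> root (map_poly intr 'Phi_T) y ->
  (q %% T = 1 %% T)%N.
Proof.
move=> q_prime T_gt0 q_ndvd_T root_Phi.
have T_neq0 : T%:R != 0 :> 'F_q by rewrite -(dvdn_pcharf (pchar_Fp q_prime)).
have prim_y := root_Cyclotomic_prim T_gt0 root_Phi T_neq0.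
have y_neq0 := root_Cyclotomic_neq0 T_gt0 root_Phi.
have /eqP : y ^+ q.-1 = 1.
  apply: (mulIf y_neq0); rewrite mul1r -exprSr prednK ?prime_gt0 //.
  by rewrite -{2}(finfield.expf_card y) card_Fp.
rewrite -(prim_order_dvd prim_y) => /dvdnP[j Ej].
by rewrite -(prednK (prime_gt0 q_prime)) -addn1 Ej modnMDl.
Qed.

(* [x] is a multiple of [T N!] with ['Phi_T(x) <> 0, +-1]; a prime factor of
   ['Phi_T(x)] cannot divide [x], hence neither [T] nor [N!]. *)
Lemma exists_prime_1mod (T N : nat) : (0 < T)%N ->
  exists q, [/\ (N < q)%N, prime q & (q %% T = 1 %% T)%N].
Proof.
move=> T_gt0; set M := (T * N`!)%N.
have M_gt0 : (0 < M)%N by rewrite muln_gt0 T_gt0 fact_gt0.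
have Phi_neq0 : 'Phi_T != 0 by apply/monic_neq0/Cyclotomic_monic.
have Phi2_neq1 : 'Phi_T ^+ 2 != 1.
  apply/eqP => Phi2_eq1; have := size_exp 'Phi_T 2.
  rewrite Phi2_eq1 size_poly1 size_Cyclotomic /= => /esym/eqP.
  by rewrite muln_eq0 orbF eqn0Ngt totient_gt0 T_gt0.
have [k] : exists k, ~~ root ('Phi_T * ('Phi_T ^+ 2 - 1)) (M + M * k)%:R.
  have W_neq0 : 'Phi_T * ('Phi_T ^+ 2 - 1) != 0 by rewrite mulf_neq0 ?subr_eq0.
  apply: NNPP => all_roots; apply/(negP W_neq0)/eqP.
  apply: (poly_eq0_on_progression (r := M) M_gt0) => k.
  by apply/eqP/negPn/negP => not_root; apply: all_roots; exists k.
set x : int := (M + M * k)%:R; set v := ('Phi_T).[x].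
rewrite /root !hornerE -/v mulf_eq0 negb_or subr_eq0 => /andP[v_neq0 v2_neq1].
have v_gt1 : (1 < `|v|%N)%N.
  rewrite ltn_neqAle lt0n absz_eq0 v_neq0 andbT; apply: contra v2_neq1 => /eqP v1.
  by rewrite (intEsign v) -v1 mulr1 sqrr_sign.
set q := pdiv `|v|%N.
have q_prime : prime q by exact: pdiv_prime.
have charFq := pchar_Fp q_prime.
have root_Phi : root (map_poly intr 'Phi_T) (x%:~R : 'F_q).
  by rewrite /root horner_map -(dvdz_pcharf charFq) dvdzE pdiv_dvd.
have q_ndvd_M : ~~ (q %| M)%N.
  move: (root_Cyclotomic_neq0 T_gt0 root_Phi); apply: contra => dvd_qM.
  by rewrite -(dvdz_pcharf charFq) /x natz dvdzE /= dvdn_addr // dvdn_mulr.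
exists q; split=> //.
  rewrite ltnNge; apply: contra q_ndvd_M => le_qN.
  by rewrite dvdn_mull // dvdn_fact // prime_gt0.
apply: prime_mod_of_root_Cyclotomic root_Phi => //.
by apply: contra q_ndvd_M => dvd_qT; rewrite dvdn_mulr.
Qed.

Theorem mainTheorem7 (R : realType) (p : nat) (A B : {poly R}) (lamp : R) :
  (2 <= p)%N ->
  B.[0] != 0 ->
  (size A < size B)%N ->
  A != 0 ->
  lamp != 0 ->
  eigenU p A B lamp ->
  (forall z : R[i], is_pole A B z -> exists n : nat, (0 < n)%N /\ n.-unity_root z) /\
  (forall L : nat, is_level A B L ->
     forall m : nat, (0 < m)%N -> exists lam : R, eigenU (p + m * L)%N A B lam) /\
  (forall N : nat, exists q : nat,
     (N < q)%N /\ prime q /\ exists lam : R, eigenU q A B lam).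
Proof.
move=> p_ge2 B0 ltAB _ lam0 eig_p; rewrite horner_coef0 in B0.
have p_gt0 : (0 < p)%N by apply: leq_trans p_ge2.
have [D0 ltAD copAD convDA] := reduced_conv_fraction B0 ltAB (fun n => conv_taylor A n B0).
have [K K_gt0 rootsD] :=
  Ueigen_map_roots_unity (real_complex R) p_gt0 lam0 D0 copAD convDA eig_p.
have pK_gt1 : (1 < p ^ K)%N by rewrite -{1}(expn0 p) ltn_exp2l.
set T0 := (p ^ K).-1 in rootsD.
have T0_gt0 : (0 < T0)%N by rewrite -ltnS prednK // ltnW.
have pK_mod T : (T %| T0)%N -> (p ^ K %% T = 1 %% T)%N.
  by move=> /dvdnP[j Ej]; rewrite -(prednK (ltnW pK_gt1)) -/T0 Ej -addn1 modnMDl.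
have eig_pK := Ueigen_exp K eig_p.
split; [|split].
- by move=> z /rootsD zT0; exists T0; rewrite unity_rootE zT0.
- move=> L [L_gt0 [L_dvd _]] m _; set T := gcdn L T0.
  have T_gt0 : (0 < T)%N by rewrite gcdn_gt0 L_gt0.
  have rootsT z : is_pole A B z -> z ^+ T = 1.
    move=> pole_z; have [n prim_n dvd_nT0] := prim_order_exists T0_gt0 (rootsD z pole_z).
    by apply/eqP; rewrite -(prim_order_dvd prim_n) dvdn_gcd dvd_nT0 (L_dvd z n).
  have qpa := quasi_polynomial_of_roots_unity T_gt0 ltAD convDA rootsT.
  apply: (Ueigen_quasi_polynomial T_gt0 pK_gt1 (pK_mod _ (dvdn_gcdr _ _)) qpa eig_pK
    p_gt0 eig_p).
  by have /dvdnP[j ->] := dvdn_gcdl L T0; rewrite mulnA addnC modnMDl.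
- move=> N; have [q [lt_Nq q_prime q_mod]] := exists_prime_1mod N T0_gt0.
  have qpa := quasi_polynomial_of_roots_unity T0_gt0 ltAD convDA rootsD.
  have q_modK : (q %% T0 = p ^ K %% T0)%N by rewrite q_mod pK_mod.
  have [mu eig_q] := Ueigen_quasi_polynomial T0_gt0 pK_gt1 (pK_mod _ (dvdnn _)) qpa
    eig_pK (ltnW pK_gt1) eig_pK q_modK.
  by exists q; split=> //; split=> //; exists mu.
Qed.
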